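(* For every integer $n\ge0$, $$\sum_{k=0}^{n}\lambda^{n-k}B^{(c)}_{k,\lambda}(x,y)S_2(n,k)=\sum_{m=0}^{n}\sum_{l=0}^{\lfloor m/2\rfloor}\frac{\lambda^{n-m}}{n-m+1}\binom{n}{m}\binom{m}{2l}(-1)^l y^{2l}B_{m-2l}(x).$$
   Context: Let $\lambda$ be a nonzero real number; generating functions are formal power series in $t$. $e_\lambda^{x}(t)=(1+\lambda t)^{x/\lambda}$ and $\cos_\lambda^{(y)}(t)=\cos\!\big(\tfrac{y}{\lambda}\log(1+\lambda t)\big)$. The type 2 degenerate cosine-Bernoulli polynomials are defined by $\frac{t}{e_\lambda^{1/2}(t)-e_\lambda^{-1/2}(t)}e_\lambda^{x}(t)\cos_\lambda^{(y)}(t)=\sum_{n\ge0}B^{(c)}_{n,\lambda}(x,y)\frac{t^n}{n!}$. The (non-degenerate) type 2 Bernoulli polynomials are defined by $\frac{t}{e^{t/2}-e^{-t/2}}e^{xt}=\sum_{n\ge0}B_n(x)\frac{t^n}{n!}$. $S_2(n,k)$ are the Stirling numbers of the second kind, $\frac{1}{k!}(e^t-1)^k=\sum_{n\ge k}S_2(n,k)\frac{t^n}{n!}$. *)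

(* Formal power series in t over a real field R are
   represented by their coefficient sequences  nat -> R. *)
From HB Require Import structures.
From mathcomp Require Import all_boot all_order all_algebra.
Set Implicit Arguments. Unset Strict Implicit. Unset Printing Implicit Defensive.
Import Order.TTheory GRing.Theory Num.Theory.
Local Open Scope ring_scope.

Section FPS.
Variable R : realFieldType.

Definition fps := nat -> R.

Definition fps_one : fps := fun n => (n == 0%N)%:R.
Definition fps_X : fps := fun n => (n == 1%N)%:R.
Definition fps_add (a b : fps) : fps := fun n => a n + b n.
Definition fps_sub (a b : fps) : fps := fun n => a n - b n.
Definition fps_scale (c : R) (a : fps) : fps := fun n => c * a n.
Definition fps_mul (a b : fps) : fps :=
  fun n => \sum_(k < n.+1) a k * b (n - k)%N.
Fixpoint fps_pow (a : fps) (k : nat) : fps :=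
  match k with 0 => fps_one | k'.+1 => fps_mul a (fps_pow a k') end.
(* composition f(g(t)), meaningful when g has zero constant term *)
Definition fps_comp (f g : fps) : fps :=
  fun n => \sum_(k < n.+1) f k * fps_pow g k n.
(* a(t)/t, meaningful when a has zero constant term *)
Definition fps_divX (a : fps) : fps := fun n => a n.+1.
(* multiplicative inverse of a series with nonzero constant term:
   b_0 = 1/a_0,  b_n = -(1/a_0) * sum_{k=1}^n a_k b_{n-k}  *)
Fixpoint fps_inv_aux (a : fps) (fuel n : nat) : R :=
  match fuel with
  | 0 => (a 0%N)^-1
  | fuel'.+1 =>
      if n is 0 then (a 0%N)^-1
      else - (a 0%N)^-1 * \sum_(k < n) a k.+1 * fps_inv_aux a fuel' (n - k.+1)%N
  end.
Definition fps_inv (a : fps) : fps := fun n => fps_inv_aux a n n.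

Definition fps_exp : fps := fun n => (n`!%:R)^-1.
Definition fps_cos : fps :=
  fun n => if odd n then 0 else (-1) ^+ (n./2) / n`!%:R.
Definition fps_log1p : fps :=
  fun n => if n is 0 then 0 else (-1) ^+ n.-1 / n%:R.

Definition log_lam (lam : R) : fps := fps_comp fps_log1p (fps_scale lam fps_X).
(* e_lam^x(t) = (1 + lam t)^(x/lam) = exp((x/lam) log(1+lam t)) *)
Definition e_lam (lam x : R) : fps := fps_comp fps_exp (fps_scale (x / lam) (log_lam lam)).
Definition cos_lam (lam y : R) : fps := fps_comp fps_cos (fps_scale (y / lam) (log_lam lam)).

Definition degCosBernoulli (lam x y : R) (n : nat) : R :=
  n`!%:R * fps_mul
    (fps_inv (fps_divX (fps_sub (e_lam lam (1/2)) (e_lam lam (-(1/2))))))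
    (fps_mul (e_lam lam x) (cos_lam lam y)) n.

Definition fps_expc (c : R) : fps := fps_comp fps_exp (fps_scale c fps_X).

Definition bernoulli2 (n : nat) (x : R) : R :=
  n`!%:R * fps_mul
    (fps_inv (fps_divX (fps_sub (fps_expc (1/2)) (fps_expc (-(1/2))))))
    (fps_expc x) n.

Definition stirling2 (n k : nat) : R :=
  n`!%:R * ((k`!%:R)^-1 * fps_pow (fps_sub fps_exp fps_one) k n).

End FPS.

From HB Require Import structures.
From mathcomp Require Import all_boot all_order all_algebra.
From mathcomp Require Import zify ring.
Unset Strict Implicit. Unset Printing Implicit Defensive.
Import Order.TTheory GRing.Theory Num.Theory.
Local Open Scope ring_scope.

(* Let F(t) be the generating function of the B^(c)_{n,lam}(x,y) and substitute
   t = g(s) := (e^(lam s) - 1)/lam.  Since log(1 + lam g(s)) = lam s, we get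
   e_lam^x(g(s)) = e^(x s) and cos_lam^(y)(g(s)) = cos(y s), hence
     F(g(s)) = g(s)/s * s/(e^(s/2) - e^(-s/2)) * e^(x s) * cos(y s).
   As g(s)^k = lam^(-k) (e^(lam s) - 1)^k produces the Stirling numbers
   S2(n,k), the coefficient of s^n/n! on the left is the left-hand side of the
   theorem; since g(s)/s = sum_j lam^j s^j/(j+1)!, the coefficient of s^n/n! on
   the right is its right-hand side. *)

Section Agreement.
Context {R : comNzRingType}.
Implicit Types p q r a b c : {poly R}.

Definition agree (N : nat) p q := forall i, (i < N)%N -> p`_i = q`_i.

Lemma agree_refl {N} p : agree N p p. Proof. by []. Qed.

Lemma agree_sym {N p q} : agree N p q -> agree N q p.
Proof. by move=> h i hi; rewrite h. Qed.

Lemma agree_trans {N p q r} : agree N p q -> agree N q r -> agree N p r.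
Proof. by move=> h1 h2 i hi; rewrite h1 // h2. Qed.

Lemma agree_le {M N p q} : (M <= N)%N -> agree N p q -> agree M p q.
Proof. by move=> hMN h i hi; apply: h; apply: leq_trans hMN. Qed.

Lemma agreeB {N p q p' q'} : agree N p p' -> agree N q q' -> agree N (p - q) (p' - q').
Proof. by move=> h1 h2 i hi; rewrite !coefB h1 // h2. Qed.

Lemma agreeZ {N} (c : R) {p p'} : agree N p p' -> agree N (c *: p) (c *: p').
Proof. by move=> h i hi; rewrite !coefZ h. Qed.

(* the coefficient of degree i of a product only involves degrees <= i *)
Lemma agreeM {N p q p' q'} : agree N p p' -> agree N q q' -> agree N (p * q) (p' * q').
Proof.
move=> h1 h2 i hi; rewrite !coefM; apply: eq_bigr => -[j hj] _ /=.
by rewrite h1 ?h2 //; lia.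
Qed.

Lemma agreeX {N p p'} k : agree N p p' -> agree N (p ^+ k) (p' ^+ k).
Proof. by move=> h; elim: k => [|k IH] //; rewrite !exprS; apply: agreeM. Qed.

Lemma agree_mulXK {N p q} : agree N.+1 ('X * p) ('X * q) -> agree N p q.
Proof. by move=> h i hi; have := h i.+1 hi; rewrite !coefXM. Qed.

Lemma coef_expr_low p k i : p`_0 = 0 -> (i < k)%N -> (p ^+ k)`_i = 0.
Proof.
move=> p0; elim: k i => [//|k IH] i hi.
rewrite exprS coefM big1 // => -[[|j] hj] _ /=; first by rewrite p0 mul0r.
by rewrite IH ?mulr0 //; lia.
Qed.

Lemma coef_comp_low p q i : q`_0 = 0 ->
  (p \Po q)`_i = \sum_(j < i.+1) p`_j * (q ^+ j)`_i.
Proof.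
move=> q0; rewrite coef_comp_poly.
pose F j := p`_j * (q ^+ j)`_i; pose M := maxn (size p) i.+1.
rewrite (big_ord_widen M F) ?leq_maxl // (big_ord_widen M F) ?leq_maxr //.
rewrite big_mkcond [RHS]big_mkcond; apply: eq_bigr => j _ /=.
case: ifP; case: ifP => //= h1 h2.
- by rewrite /F coef_expr_low ?mulr0 // ltnNge -ltnS h1.
- by rewrite /F nth_default ?mul0r // leqNgt h2.
Qed.

Lemma coef0_comp p q : q`_0 = 0 -> (p \Po q)`_0 = p`_0.
Proof. by move=> q0; rewrite coef_comp_low // big_ord1 expr0 coefC mulr1. Qed.

Lemma agree_comp {N p q p' q'} : q`_0 = 0 -> q'`_0 = 0 ->
  agree N p p' -> agree N q q' -> agree N (p \Po q) (p' \Po q').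
Proof.
move=> q0 q'0 h1 h2 i hi; rewrite !coef_comp_low //; apply: eq_bigr => -[j hj] _ /=.
by rewrite h1 ?(agreeX j h2) //; lia.
Qed.

Lemma coef_compZX p (c : R) i : (p \Po (c *: 'X))`_i = c ^+ i * p`_i.
Proof.
rewrite coef_comp_low; last by rewrite coefZ coefX mulr0.
rewrite big_ord_recr /= big1 ?add0r => [|[j hj] _ /=].
  by rewrite exprZn coefZ coefXn eqxx mulr1 mulrC.
by rewrite exprZn coefZ coefXn eq_sym (ltn_eqF hj) !mulr0.
Qed.

Lemma comp1 q : (1 : {poly R}) \Po q = 1.
Proof. by rewrite -polyC1 comp_polyC. Qed.

Lemma agree_inv_transfer {N a a' b b' c} :
  agree N (a * a') 1 -> agree N (b * b') 1 -> agree N (c * a) b ->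
  agree N a' (c * b').
Proof.
move=> ha hb hca.
have e1 : agree N a' (a' * (b * b')).
  by rewrite -{1}[a']mulr1; apply: agreeM => //; apply: agree_sym.
have e2 : agree N (a' * (b * b')) (a' * ((c * a) * b')).
  by apply: agreeM => //; apply: agreeM => //; apply: agree_sym.
apply: (agree_trans e1 (agree_trans e2 _)).
have -> : a' * ((c * a) * b') = (c * b') * (a * a') by ring.
by rewrite -[X in agree _ _ X]mulr1; apply: agreeM.
Qed.

End Agreement.

(* agreement of derivatives lifts to agreement one degree higher, given
   agreement of the constant terms (integration divides by positive integers) *)
Lemma agree_integ {R : numDomainType} {N} {p q : {poly R}} :
  p`_0 = q`_0 -> agree N p^`() q^`() -> agree N.+1 p q.
Proof.
move=> h0 h [|i] hi; first exact: h0.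
by have /eqP := h i hi; rewrite !coef_deriv eqrMn2r => /eqP.
Qed.

Section Truncation.
Context {R : realFieldType}.
Implicit Types (a b f g : fps R).

Definition trunc N a : {poly R} := \poly_(i < N) a i.

Lemma coef_trunc N a i : (trunc N a)`_i = if (i < N)%N then a i else 0.
Proof. by rewrite coef_poly. Qed.

Lemma trunc_coef0 N {a} : a 0%N = 0 -> (trunc N a)`_0 = 0.
Proof. by move=> a0; rewrite coef_trunc a0; case: ifP. Qed.

Lemma trunc_one N : agree N (trunc N (fps_one R)) 1.
Proof. by move=> i hi; rewrite coef_trunc hi coefC /fps_one; case: (i == 0)%N. Qed.

Lemma trunc_X N : agree N (trunc N (fps_X R)) 'X.
Proof. by move=> i hi; rewrite coef_trunc hi coefX /fps_X; case: (i == 1)%N. Qed.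

Lemma trunc_sub N a b : agree N (trunc N (fps_sub a b)) (trunc N a - trunc N b).
Proof. by move=> i hi; rewrite coefB !coef_trunc hi. Qed.

Lemma trunc_scale N c a : agree N (trunc N (fps_scale c a)) (c *: trunc N a).
Proof. by move=> i hi; rewrite coefZ !coef_trunc hi. Qed.

Lemma trunc_mul N a b : agree N (trunc N (fps_mul a b)) (trunc N a * trunc N b).
Proof.
move=> i hi; rewrite coef_trunc hi coefM; apply: eq_bigr => -[j hj] _ /=.
have hjN : (j < N)%N by lia.
have hijN : (i - j < N)%N by lia.
by rewrite !coef_trunc hjN hijN.
Qed.

Lemma trunc_pow N a k : agree N (trunc N (fps_pow a k)) (trunc N a ^+ k).
Proof.
elim: k => [|k IH]; first exact: trunc_one.
rewrite exprS.
exact: (agree_trans (trunc_mul N a (fps_pow a k)) (agreeM (agree_refl _) IH)).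
Qed.

Lemma trunc_comp N f g : g 0%N = 0 ->
  agree N (trunc N (fps_comp f g)) (trunc N f \Po trunc N g).
Proof.
move=> g0 i hi; rewrite coef_trunc hi coef_comp_low ?trunc_coef0 //.
apply: eq_bigr => -[j hj] _ /=.
have hjN : (j < N)%N by lia.
by rewrite -(trunc_pow N g j i hi) !coef_trunc hjN hi.
Qed.

Lemma trunc_divX N a : a 0%N = 0 -> agree N (trunc N a) ('X * trunc N (fps_divX a)).
Proof.
move=> a0 [|i] hi; rewrite coefXM coef_trunc hi //=.
by rewrite coef_trunc ltnW.
Qed.

Lemma fps_inv_aux_fuel a fuel fuel' n : (n <= fuel)%N -> (n <= fuel')%N ->
  fps_inv_aux a fuel n = fps_inv_aux a fuel' n.
Proof.
elim: fuel fuel' n => [|f IH] [|f'] [|n] //= h1 h2.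
congr (_ * _); apply: eq_bigr => -[k hk] _ /=; congr (_ * _); apply: IH; lia.
Qed.

Lemma fps_mul_inv a n : a 0%N != 0 -> fps_mul a (fps_inv a) n = fps_one R n.
Proof.
move=> a0; rewrite /fps_mul /fps_one big_ord_recl /= subn0.
case: n => [|n]; first by rewrite big_ord0 addr0 /fps_inv /= mulfV.
rewrite /fps_inv /= mulNr mulrN mulrA mulfV // mul1r.
apply/eqP; rewrite addrC subr_eq0; apply/eqP.
apply: eq_bigr => -[k hk] _ /=; congr (_ * _).
by apply: fps_inv_aux_fuel; rewrite /bump /=; lia.
Qed.

Lemma trunc_inv N a : a 0%N != 0 -> agree N (trunc N a * trunc N (fps_inv a)) 1.
Proof.
move=> a0 i hi; rewrite -(trunc_mul N a _ i hi) -(trunc_one N i hi).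
by rewrite !coef_trunc hi fps_mul_inv.
Qed.

Lemma fps_comp0 f g : fps_comp f g 0%N = f 0%N.
Proof. by rewrite /fps_comp big_ord1 /= /fps_one mulr1. Qed.

Lemma fps_comp1 f g : fps_comp f g 1%N = f 1%N * g 1%N.
Proof.
rewrite /fps_comp !big_ord_recr big_ord0 /= /fps_mul !big_ord_recr big_ord0 /=.
rewrite /fps_one /=.
by rewrite !mulr0 !add0r mulr1.
Qed.

End Truncation.

Section StandardSeries.
Context {R : realFieldType}.

Lemma fact_neq0 i : (i`!%:R : R) != 0.
Proof. by rewrite pnatr_eq0 -lt0n fact_gt0. Qed.

Lemma trunc_comp_scaleX N f (c : R) :
  agree N (trunc N (fps_comp f (fps_scale c (fps_X R)))) (trunc N f \Po (c *: 'X)).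
Proof.
have cX0 : fps_scale c (fps_X R) 0%N = 0 by rewrite /fps_scale /fps_X mulr0.
apply: (agree_trans (trunc_comp N f _ cX0) (agree_comp _ _ (agree_refl _) _)).
- exact: trunc_coef0.
- by rewrite coefZ coefX mulr0.
- exact: (agree_trans (trunc_scale N c _) (agreeZ c (trunc_X N))).
Qed.

Lemma fps_expcE (c : R) i : fps_expc c i = c ^+ i / i`!%:R.
Proof.
have := trunc_comp_scaleX i.+1 (fps_exp R) c i (ltnSn i).
by rewrite coef_compZX !coef_trunc ltnSn.
Qed.

Lemma fps_expc0 (c : R) : fps_expc c 0%N = 1.
Proof. by rewrite fps_expcE expr0 divr1. Qed.

Lemma fps_expc1 (c : R) : fps_expc c 1%N = c.
Proof. by rewrite fps_expcE expr1 divr1. Qed.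

Lemma trunc_expc N (c : R) :
  agree N (trunc N (fps_expc c)) (trunc N (fps_exp R) \Po (c *: 'X)).
Proof. exact: trunc_comp_scaleX. Qed.

(* log(1 + u) with u = e^(c s) - 1 equals c s: both sides vanish at 0, and
   the derivative of the left-hand side is u'/(1 + u) = c *)
Lemma log1p_comp_expc N (c : R) :
  agree N (trunc N (fps_log1p R) \Po (trunc N (fps_expc c) - 1)) (c *: 'X).
Proof.
case: N => [|M] //.
set L := trunc M.+1 (fps_log1p R); set u := trunc M.+1 (fps_expc c) - 1.
have u0 : u`_0 = 0 by rewrite coefB coefC coef_trunc /= fps_expc0 subrr.
have natK (z : R) n : (z / n.+1%:R) *+ n.+1 = z.
  by rewrite -mulr_natr divfK // pnatr_eq0.
have dL : agree M ((1 + 'X) * L^`()) 1.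
  move=> i hi; rewrite mulrDl mul1r coefD coefXM coefC !coef_deriv coef_trunc.
  rewrite ltnS hi /fps_log1p /= natK.
  case: i hi => [|i] hi /=; first by rewrite expr0 addr0.
  by rewrite coef_trunc ltnS (ltnW hi) natK exprS mulN1r addNr.
have du : agree M u^`() (c *: (1 + u)).
  move=> i hi; rewrite coef_deriv coefZ /u [1 + _]addrC subrK coefB coefC /= subr0.
  rewrite !coef_trunc !ltnS hi (ltnW hi) !fps_expcE factS natrM -mulr_natr exprS.
  by field; rewrite ?fact_neq0 //= nat1r pnatr_eq0.
apply: agree_integ.
  by rewrite coef0_comp // coef_trunc /= coefZ coefX mulr0.
rewrite deriv_comp derivZ derivX.
apply: (agree_trans (agreeM (agree_refl _) du) _).
have -> : (L^`() \Po u) * (c *: (1 + u)) = c *: (((1 + 'X) * L^`()) \Po u).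
  by rewrite comp_polyM comp_polyD comp_polyX comp1 -scalerAr mulrC.
apply: agreeZ; rewrite -[X in agree _ _ X](comp1 u).
exact: (agree_comp u0 u0 dL (agree_refl _)).
Qed.

End StandardSeries.

Definition bernoulli_den (R : realFieldType) : fps R :=
  fps_divX (fps_sub (fps_expc (1/2)) (fps_expc (-(1/2)))).

Lemma bernoulli_den0 (R : realFieldType) : bernoulli_den R 0%N = 1.
Proof. by rewrite /bernoulli_den /fps_divX /fps_sub !fps_expc1 opprK; field. Qed.

Lemma sum_even_terms {R : nmodType} (F : nat -> R) m :
  \sum_(j < m.+1) (if odd j then 0 else F j) = \sum_(l < m./2.+1) F (2 * l)%N.
Proof.
elim: m => [|m IH]; first by rewrite !big_ord1.
rewrite big_ord_recr /= IH uphalf_half.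
have hm := odd_double_half m.
case: (odd m) hm => /= hm; last by rewrite addr0.
by rewrite [RHS]big_ord_recr /= add1n; congr (_ + F _); lia.
Qed.

Section BernoulliCoefficients.
Context {R : realFieldType}.

Lemma bernoulli2_coef N x k : (k < N)%N ->
  (trunc N (fps_inv (bernoulli_den R)) * trunc N (fps_expc x))`_k
  = bernoulli2 k x / k`!%:R.
Proof.
move=> hk; rewrite -(trunc_mul N _ _ k hk) coef_trunc hk /bernoulli2.
by rewrite mulrC mulKf // fact_neq0.
Qed.

Lemma cos_bernoulli2_coef N x y m : (m < N)%N ->
  ((trunc N (fps_cos R) \Po (y *: 'X))
   * (trunc N (fps_inv (bernoulli_den R)) * trunc N (fps_expc x)))`_m
  = \sum_(l < m./2.+1) (-1) ^+ l * y ^+ (2 * l) / (2 * l)`!%:R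
      * (bernoulli2 (m - 2 * l) x / (m - 2 * l)`!%:R).
Proof.
move=> hm; rewrite coefM.
pose F j := y ^+ j * (-1) ^+ j./2 / j`!%:R * (bernoulli2 (m - j) x / (m - j)`!%:R).
rewrite (eq_bigr (fun j : 'I_m.+1 => if odd j then 0 else F j)); last first.
  move=> [j hj] _ /=; rewrite coef_compZX coef_trunc ifT; last by lia.
  rewrite bernoulli2_coef; last by lia.
  by rewrite /fps_cos /F; case: (odd j); rewrite ?mulr0 ?mul0r // !mulrA.
rewrite (sum_even_terms F); apply: eq_bigr => -[l hl] _ /=.
by rewrite /F mul2n doubleK -mul2n [_ * (-1) ^+ l]mulrC.
Qed.

End BernoulliCoefficients.

Section Substitution.
Context {R : realFieldType}.
Variable lam : R.
Hypothesis lam_neq0 : lam != 0.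

(* g(s) = (e^(lam s) - 1)/lam, the substitution which linearises
   log(1 + lam t) *)
Definition subst_lam : fps R :=
  fps_scale (1 / lam) (fps_sub (fps_expc lam) (fps_one R)).

Definition subst_lam_divX : fps R := fps_divX subst_lam.

Lemma subst_lam0 : subst_lam 0%N = 0.
Proof. by rewrite /subst_lam /fps_scale /fps_sub fps_expc0 /fps_one subrr mulr0. Qed.

Lemma trunc_subst_lam0 N : (trunc N subst_lam)`_0 = 0.
Proof. exact: (trunc_coef0 N subst_lam0). Qed.

Lemma lam_subst_lam N : agree N (lam *: trunc N subst_lam) (trunc N (fps_expc lam) - 1).
Proof.
move=> i hi; rewrite coefZ coefB !coef_trunc hi /subst_lam /fps_scale /fps_sub.
by rewrite mulrA div1r mulfV // mul1r -(trunc_one N i hi) coef_trunc hi.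
Qed.

Lemma log_lam_subst N : agree N (trunc N (log_lam lam) \Po trunc N subst_lam) (lam *: 'X).
Proof.
case: N => [|N] //; have g0 := trunc_subst_lam0 N.+1.
have hlog := trunc_comp_scaleX N.+1 (fps_log1p R) lam.
apply: (agree_trans (agree_comp g0 g0 hlog (agree_refl _)) _).
rewrite -comp_polyA comp_polyZ comp_polyX.
apply: (agree_trans (agree_comp _ _ (agree_refl _) (lam_subst_lam N.+1))
                    (log1p_comp_expc N.+1 lam)).
- by rewrite coefZ g0 mulr0.
- by rewrite coefB coefC coef_trunc /= fps_expc0 subrr.
Qed.

Lemma comp_log_lam_subst N f c :
  agree N (trunc N (fps_comp f (fps_scale (c / lam) (log_lam lam))) \Po trunc N subst_lam)
    (trunc N f \Po (c *: 'X)).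
Proof.
set h := fps_scale (c / lam) (log_lam lam).
have h0 : h 0%N = 0 by rewrite /h /fps_scale /log_lam fps_comp0 mulr0.
have g0 := trunc_subst_lam0 N.
apply: (agree_trans (agree_comp g0 g0 (trunc_comp N f h h0) (agree_refl _)) _).
rewrite -comp_polyA; apply: (agree_comp _ _ (agree_refl _)).
- by rewrite coef0_comp // (trunc_coef0 N h0).
- by rewrite coefZ coefX mulr0.
have hh := agree_comp g0 g0 (trunc_scale N (c / lam) (log_lam lam)) (agree_refl _).
rewrite comp_polyZ in hh; apply: (agree_trans hh _).
by apply: (agree_trans (agreeZ (c / lam) (log_lam_subst N)) _); rewrite scalerA divfK.
Qed.

Lemma e_lam_subst N z :
  agree N (trunc N (e_lam lam z) \Po trunc N subst_lam) (trunc N (fps_expc z)).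
Proof.
exact: (agree_trans (comp_log_lam_subst N (fps_exp R) z) (agree_sym (trunc_expc N z))).
Qed.

Lemma e_lam0 z : e_lam lam z 0%N = 1.
Proof. by rewrite /e_lam fps_comp0 /fps_exp /= invr1. Qed.

Lemma e_lam1 z : e_lam lam z 1%N = z.
Proof.
rewrite /e_lam fps_comp1 /fps_exp /= invr1 mul1r /fps_scale /log_lam fps_comp1.
by rewrite /fps_scale /fps_X /= divr1 expr0 mul1r mulr1 divfK.
Qed.

Definition den_lam : fps R := fps_divX (fps_sub (e_lam lam (1/2)) (e_lam lam (-(1/2)))).

Lemma den_lam0 : den_lam 0%N = 1.
Proof. by rewrite /den_lam /fps_divX /fps_sub !e_lam1 opprK; field. Qed.

(* g(s)/s * den_lam(g(s)) = (e^(s/2) - e^(-s/2))/s: multiply both sides by s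
   and use e_lam^z(g(s)) = e^(z s) *)
Lemma den_lam_subst K :
  agree K (trunc K.+1 subst_lam_divX * (trunc K.+1 den_lam \Po trunc K.+1 subst_lam))
    (trunc K.+1 (bernoulli_den R)).
Proof.
apply: agree_mulXK; set N := K.+1; have g0 := trunc_subst_lam0 N.
pose num := fps_sub (e_lam lam (1/2)) (e_lam lam (-(1/2))).
have num0 : num 0%N = 0 by rewrite /num /fps_sub !e_lam0 subrr.
have bnum0 : fps_sub (fps_expc (1/2 : R)) (fps_expc (-(1/2))) 0%N = 0.
  by rewrite /fps_sub !fps_expc0 subrr.
apply: (agree_trans _ (trunc_divX N _ bnum0)).
have num_subst : agree N (trunc N num \Po trunc N subst_lam)
    (trunc N (fps_sub (fps_expc (1/2)) (fps_expc (-(1/2))))).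
  apply: (agree_trans (agree_comp g0 g0 (trunc_sub N _ _) (agree_refl _)) _).
  rewrite comp_polyB; apply: (agree_trans _ (agree_sym (trunc_sub N _ _))).
  exact: (agreeB (e_lam_subst N _) (e_lam_subst N _)).
apply: (agree_trans _ num_subst).
have num_divX := agree_sym (trunc_divX N num num0).
apply: (agree_trans _ (agree_comp g0 g0 num_divX (agree_refl _))).
rewrite comp_polyM comp_polyX mulrA; apply: (agreeM _ (agree_refl _)).
exact: (agree_sym (trunc_divX N _ subst_lam0)).
Qed.

Lemma inv_den_lam_subst K :
  agree K (trunc K.+1 (fps_inv den_lam) \Po trunc K.+1 subst_lam)
    (trunc K.+1 subst_lam_divX * trunc K.+1 (fps_inv (bernoulli_den R))).
Proof.
set N := K.+1; have g0 := trunc_subst_lam0 N.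
apply: (agree_inv_transfer _ _ (den_lam_subst K)).
- have den_lam_unit : den_lam 0%N != 0 by rewrite den_lam0 oner_neq0.
  have := agree_comp g0 g0 (trunc_inv N den_lam den_lam_unit) (agree_refl _).
  by rewrite comp_polyM comp1; apply: agree_le.
- by apply: (agree_le (leqnSn K) (trunc_inv N _ _)); rewrite bernoulli_den0 oner_neq0.
Qed.

(* the generating function of the B^(c)_{n,lam}(x,y), divided by n! *)
Definition cosBernoulli_gf (x y : R) : fps R :=
  fps_mul (fps_inv den_lam) (fps_mul (e_lam lam x) (cos_lam lam y)).

Lemma cosBernoulli_gf_subst K x y :
  agree K (trunc K.+1 (cosBernoulli_gf x y) \Po trunc K.+1 subst_lam)
    ((trunc K.+1 subst_lam_divX * trunc K.+1 (fps_inv (bernoulli_den R)))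
     * (trunc K.+1 (fps_expc x) * (trunc K.+1 (fps_cos R) \Po (y *: 'X)))).
Proof.
set N := K.+1; have g0 := trunc_subst_lam0 N.
have hF : agree N (trunc N (cosBernoulli_gf x y))
    (trunc N (fps_inv den_lam) * (trunc N (e_lam lam x) * trunc N (cos_lam lam y))).
  exact: (agree_trans (trunc_mul N _ _) (agreeM (agree_refl _) (trunc_mul N _ _))).
apply: (agree_trans (agree_le (leqnSn K) (agree_comp g0 g0 hF (agree_refl _))) _).
rewrite !comp_polyM; apply: (agreeM (inv_den_lam_subst K) _).
apply: (agree_le (leqnSn K) (agreeM (e_lam_subst N x) _)).
exact: comp_log_lam_subst.
Qed.

Lemma degCosBernoulliE x y k :
  degCosBernoulli lam x y k = k`!%:R * cosBernoulli_gf x y k.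
Proof. by []. Qed.

(* g(s)^k = lam^(-k) (e^(lam s) - 1)^k: powers of g produce Stirling numbers *)
Lemma subst_lam_pow_coef N k n : (k <= n)%N -> (n < N)%N ->
  ((trunc N subst_lam) ^+ k)`_n
  = lam ^+ (n - k) * fps_pow (fps_sub (fps_exp R) (fps_one R)) k n.
Proof.
move=> hkn hn; apply: (mulfI (expf_neq0 k lam_neq0)).
rewrite mulrA -exprD subnKC // -coefZ -exprZn.
have lam_g :
    agree N (lam *: trunc N subst_lam) ((trunc N (fps_exp R) - 1) \Po (lam *: 'X)).
  apply: (agree_trans (lam_subst_lam N)).
  by rewrite comp_polyB comp1; apply: (agreeB (trunc_expc N lam) (agree_refl _)).
have e_sub :
    agree N (trunc N (fps_sub (fps_exp R) (fps_one R))) (trunc N (fps_exp R) - 1).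
  exact: (agree_trans (trunc_sub N _ _) (agreeB (agree_refl _) (trunc_one N))).
rewrite (agreeX k lam_g n hn) -rmorphXn /= coef_compZX.
by rewrite -(agreeX k e_sub n hn) -(trunc_pow N _ k n hn) coef_trunc hn.
Qed.

Lemma subst_lam_divX_coef j : subst_lam_divX j = lam ^+ j / j.+1`!%:R.
Proof.
rewrite /subst_lam_divX /fps_divX /subst_lam /fps_scale /fps_sub fps_expcE /fps_one /=.
by rewrite subr0 exprS; field; rewrite fact_neq0.
Qed.

Lemma stirling_sum_coef x y n :
  \sum_(k < n.+1) lam ^+ (n - k)%N * degCosBernoulli lam x y k * stirling2 R n k
  = n`!%:R * (trunc n.+2 (cosBernoulli_gf x y) \Po trunc n.+2 subst_lam)`_n.
Proof.
rewrite coef_comp_low ?trunc_subst_lam0 // mulr_sumr; apply: eq_bigr => -[k hk] _ /=.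
rewrite coef_trunc ifT; last by lia.
rewrite subst_lam_pow_coef // degCosBernoulliE /stirling2.
by field; rewrite fact_neq0.
Qed.

End Substitution.

Lemma natr_bin {R : realFieldType} {n m} : (m <= n)%N ->
  ('C(n, m)%:R : R) = n`!%:R / (m`!%:R * (n - m)`!%:R).
Proof.
move=> hmn; rewrite -(bin_fact hmn) !natrM mulfK //.
by rewrite mulf_neq0 // fact_neq0.
Qed.

Theorem theorem2p5 (R : realFieldType) (lam x y : R) (hlam : lam != 0) (n : nat) :
  \sum_(k < n.+1) lam ^+ (n - k)%N * degCosBernoulli lam x y k * stirling2 R n k =
  \sum_(m < n.+1) \sum_(l < (m./2).+1)
     lam ^+ (n - m)%N / (n - m + 1)%N%:R * 'C(n, m)%:R * 'C(m, 2 * l)%:R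
       * (-1) ^+ l * y ^+ (2 * l)%N * bernoulli2 (m - 2 * l)%N x.
Proof.
rewrite (stirling_sum_coef lam hlam).
rewrite (cosBernoulli_gf_subst lam hlam n.+1 x y n (ltnSn n)).
set G := trunc _ (subst_lam_divX lam); set Ib := trunc _ (fps_inv _).
set Ex := trunc _ (fps_expc x); set C := _ \Po (y *: 'X).
have -> : G * Ib * (Ex * C) = (C * (Ib * Ex)) * G by ring.
rewrite coefM mulr_sumr; apply: eq_bigr => -[m hm] _ /=.
rewrite cos_bernoulli2_coef; last by lia.
rewrite coef_trunc ifT; last by lia.
rewrite (subst_lam_divX_coef lam hlam) mulr_suml mulr_sumr.
apply: eq_bigr => -[l hl] _ /=.
have hl2 : (2 * l <= m)%N by have := odd_double_half m; rewrite ltnS in hl; lia.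
have hmn : (m <= n)%N by lia.
rewrite (natr_bin hmn) (natr_bin hl2) addn1 factS !natrM.
by field; rewrite !fact_neq0 nat1r pnatr_eq0.
Qed.
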